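(* Let $X$ and $\Lambda$ be nonempty sets, $f: X\to\mathbb{R}$ a function, and $(f_\lambda)_{\lambda\in\Lambda}$ a family of real-valued functions on $X$ such that $(f_\lambda(x))_{\lambda\in\Lambda}\in\ell^\infty(\Lambda)$ for each $x\in X$. Then the family $(f_\lambda-f)_{\lambda\in\Lambda}$ is infsup-convex on $X$ if and only if for every $\alpha\in\mathbb{R}$ satisfying $f(x)+\alpha\le\sup_{\lambda\in\Lambda}f_\lambda(x)$ for all $x\in X$, there exists $\Phi\in\Delta_\Lambda$ such that $f(x)+\alpha\le\Phi((f_\lambda(x))_{\lambda\in\Lambda})$ for all $x\in X$.
   Context: For a nonempty set $\Lambda$, $\ell^\infty(\Lambda)$ is the real Banach space of bounded real-valued functions on $\Lambda$ (sup-norm), $\ell^\infty(\Lambda)^*$ its topological dual, and $\Delta_\Lambda:=\{\Phi\in\ell^\infty(\Lambda)^*:\ \Phi(\varphi)\le\sup_{\lambda\in\Lambda}\varphi(\lambda)\ \forall\varphi\in\ell^\infty(\Lambda)\}$. Let $\Delta_m:=\{(t_1,\dots,t_m)\in\mathbb{R}^m: t_j\ge0,\ \sum_j t_j=1\}$. A family $(g_\lambda)_{\lambda\in\Lambda}$ of real-valued functions on a nonempty set $X$ is infsup-convex on $X$ if for all $m\ge1$, $\mathbf{t}\in\Delta_m$ and $x_1,\dots,x_m\in X$: $\inf_{x\in X}\sup_{\lambda\in\Lambda}g_\lambda(x)\le\sup_{\lambda\in\Lambda}\sum_{j=1}^m t_j g_\lambda(x_j)$. *)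

From HB Require Import structures.
From mathcomp Require Import all_boot all_order all_algebra.
From mathcomp Require Import all_classical all_reals.
From mathcomp Require Import ereal Rstruct.
Set Implicit Arguments. Unset Strict Implicit. Unset Printing Implicit Defensive.
Import Order.TTheory GRing.Theory Num.Theory.
Local Open Scope ring_scope.
Local Open Scope classical_set_scope.

Notation RR := Rdefinitions.R.

Definition supL (Lam : Type) (phi : Lam -> RR) : \bar RR :=
  ereal_sup (range (fun l => (phi l)%:E)).

Definition linfty (Lam : Type) (phi : Lam -> RR) : Prop :=
  exists M : RR, forall l, `|phi l| <= M.

(* Phi (a function on all of Lam -> R, only its restriction to l^oo(Lam)
   matters) is an element of the topological dual l^oo(Lam)^*:
   linear on l^oo(Lam) and bounded w.r.t. the sup-norm. *)
Definition linfty_dual (Lam : Type) (Phi : (Lam -> RR) -> RR) : Prop :=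
  (forall (a : RR) (phi psi : Lam -> RR), linfty phi -> linfty psi ->
      Phi (fun l => a * phi l + psi l) = a * Phi phi + Phi psi) /\
  (exists C : RR, forall (phi : Lam -> RR) (M : RR),
      (forall l, `|phi l| <= M) -> `|Phi phi| <= C * M).

Definition DeltaL (Lam : Type) (Phi : (Lam -> RR) -> RR) : Prop :=
  linfty_dual Phi /\
  forall phi : Lam -> RR, linfty phi -> ((Phi phi)%:E <= supL phi)%E.

Definition infsup_convex (X Lam : Type) (g : Lam -> X -> RR) : Prop :=
  forall (m : nat) (t : 'I_m -> RR) (xs : 'I_m -> X),
    (0 < m)%N -> (forall j, 0 <= t j) -> \sum_(j < m) t j = 1 ->
    (ereal_inf (range (fun x => supL (fun l => g l x)))
       <= supL (fun l => (\sum_(j < m) t j * g l (xs j))%R))%E.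

(* Everything rests on the Mazur-Orlicz form of the Hahn-Banach theorem for the
   sublinear functional [lsup] (supremum over Lam) on l^oo(Lam): points F_x of
   l^oo(Lam) with prescribed values b_x admit a linear L <= lsup with
   b_x <= L F_x iff sum_j t_j b_(x_j) <= lsup (sum_j t_j F_(x_j)) for every
   convex combination, and the linear functionals below lsup are exactly the
   elements of Delta_Lam.  For b = f + alpha, with alpha ranging over the lower
   bounds of inf_x lsup (F_x - f x), the combination condition is
   infsup-convexity of (F_l - f).  Hahn-Banach itself comes from Zorn's lemma:
   a minimal sublinear functional below p is odd, hence linear. *)

From HB Require Import structures.
From mathcomp Require Import all_boot all_order all_algebra.
From mathcomp Require Import all_classical all_reals.
From mathcomp Require Import ereal Rstruct.
From mathcomp Require Import lra.
Import Order.TTheory GRing.Theory Num.Theory.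
Local Open Scope ring_scope.
Local Open Scope classical_set_scope.
Set Implicit Arguments. Unset Strict Implicit. Unset Printing Implicit Defensive.

Section Sublinear.
Variables (R : realType) (V : lmodType R).

Record sublinear (p : V -> R) : Prop := Sublinear {
  sublinearD : forall u v, p (u + v) <= p u + p v;
  sublinearZ : forall a u, 0 < a -> p (a *: u) <= a * p u }.

Record cone (C : V -> R -> Prop) : Prop := Cone {
  cone0 : C 0 0;
  coneD : forall u a v b, C u a -> C v b -> C (u + v) (a + b);
  coneZ : forall k u a, 0 < k -> C u a -> C (k *: u) (k * a) }.

(* Any linear functional below [cone_inf p C] dominates the cone [C]
   (see [cone_infN]). *)
Definition cone_inf (p : V -> R) (C : V -> R -> Prop) (x : V) : R :=
  inf [set p (x + va.1) - va.2 | va in [set va | C va.1 va.2]].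

Section SublinearTheory.
Variables (p : V -> R) (p_sub : sublinear p).

Lemma sublinear0 : p 0 = 0.
Proof.
have two_gt0 : (0 : R) < 2 := ltr0Sn R 1.
have := sublinearZ p_sub 0 two_gt0.
have := sublinearZ p_sub 0 (eqbRL (invr_gt0 2) two_gt0).
rewrite !scaler0; lra.
Qed.

Lemma sublinearZ_nneg a u : 0 <= a -> p (a *: u) = a * p u.
Proof.
rewrite le_eqVlt => /predU1P[<-|a_gt0]; first by rewrite scale0r sublinear0 mul0r.
apply/eqP; rewrite eq_le sublinearZ //=.
have := sublinearZ p_sub (a *: u) (eqbRL (invr_gt0 a) a_gt0).
rewrite scalerA mulVf ?gt_eqF // scale1r -(ler_pM2l a_gt0) mulrA mulfV ?gt_eqF //.
by rewrite mul1r.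
Qed.

Lemma sublinear_ge_oppN u : - p (- u) <= p u.
Proof. by have := sublinearD p_sub u (- u); rewrite subrr sublinear0; lra. Qed.

Variables (C : V -> R -> Prop) (C_cone : cone C).
Hypothesis C_le : forall v a, C v a -> a <= p v.

Let cone_inf_has_inf x :
  has_inf [set p (x + va.1) - va.2 | va in [set va | C va.1 va.2]].
Proof.
split; first by exists (p (x + 0) - 0), (0, 0) => //; exact: cone0.
exists (- p (- x)) => _ [[v a] /= Cva <-].
have := sublinearD p_sub (x + v) (- x); rewrite addrC addKr.
have := C_le Cva; lra.
Qed.

Lemma cone_inf_le x v a : C v a -> cone_inf p C x <= p (x + v) - a.
Proof. by move=> Cva; apply: ge_inf; [case: (cone_inf_has_inf x)|exists (v, a)]. Qed.

Lemma le_cone_inf x y : (forall v a, C v a -> y <= p (x + v) - a) -> y <= cone_inf p C x.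
Proof.
move=> ley; apply: lb_le_inf; first by case: (cone_inf_has_inf x).
by move=> _ [[v a] /= Cva <-]; exact: ley.
Qed.

Lemma cone_inf_le0 x : cone_inf p C x <= p x.
Proof. by have := cone_inf_le x (cone0 C_cone); rewrite addr0 subr0. Qed.

Lemma cone_infN v a : C v a -> cone_inf p C (- v) <= - a.
Proof. by move=> /(cone_inf_le (- v)); rewrite addNr sublinear0 sub0r. Qed.

Lemma sublinear_cone_inf : sublinear (cone_inf p C).
Proof.
split=> [x y|k x k_gt0].
- rewrite -lerBlDr; apply: le_cone_inf => v a Cva.
  suff : cone_inf p C (x + y) - (p (x + v) - a) <= cone_inf p C y by lra.
  apply: le_cone_inf => w b Cwb.
  have := cone_inf_le (x + y) (coneD C_cone Cva Cwb).
  have := sublinearD p_sub (x + v) (y + w); rewrite addrACA; lra.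
- rewrite -ler_pdivrMl //; apply: le_cone_inf => v a Cva.
  rewrite ler_pdivrMl // mulrBr -(sublinearZ_nneg _ (ltW k_gt0)) scalerDr.
  exact: cone_inf_le (coneZ C_cone k_gt0 Cva).
Qed.

End SublinearTheory.

Lemma sublinear_odd_scalar (q : V -> R) :
  sublinear q -> (forall u, q (- u) = - q u) -> scalar q.
Proof.
move=> q_sub q_odd.
have qD u v : q (u + v) = q u + q v.
  apply/eqP; rewrite eq_le sublinearD //=.
  have := sublinearD q_sub (- u) (- v); rewrite -opprD !q_odd; lra.
have qZ a u : q (a *: u) = a * q u.
  have [a_ge0|a_lt0] := leP 0 a; first exact: sublinearZ_nneg.
  rewrite -[in LHS](opprK a) scaleNr q_odd sublinearZ_nneg ?oppr_ge0 ?ltW //.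
  by rewrite mulNr opprK.
by move=> a u v; rewrite qD qZ.
Qed.

Lemma minimal_sublinear_odd (q : V -> R) : sublinear q ->
  (forall r, sublinear r -> (forall u, r u <= q u) -> forall u, q u <= r u) ->
  forall u, q (- u) = - q u.
Proof.
move=> q_sub q_min y.
(* Minimality forces q = cone_inf q C for the ray C through (y, q y), and
   cone_inf q C (- y) <= - q y. *)
pose C v a := exists2 t, 0 <= t & v = t *: y /\ a = t * q y.
have C_cone : cone C.
  split.
  - by exists 0; rewrite ?scale0r ?mul0r.
  - move=> _ _ _ _ [s s_ge0 [-> ->]] [t t_ge0 [-> ->]].
    by exists (s + t); rewrite ?addr_ge0 ?scalerDl ?mulrDl.
  - move=> k _ _ k_gt0 [t t_ge0 [-> ->]].
    by exists (k * t); [exact: mulr_ge0 (ltW k_gt0) t_ge0 | rewrite scalerA mulrA].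
have C_le v a : C v a -> a <= q v by case=> t t_ge0 [-> ->]; rewrite sublinearZ_nneg.
have C_y : C y (q y) by exists 1; rewrite ?scale1r ?mul1r.
have := q_min _ (sublinear_cone_inf q_sub C_cone C_le)
  (cone_inf_le0 q_sub C_cone C_le) (- y).
have := cone_infN q_sub C_cone C_le C_y.
have := sublinear_ge_oppN q_sub y; lra.
Qed.

Definition inf_fun (A : set (V -> R)) (u : V) : R := inf [set q u | q in A].

Section ChainInf.
Variables (p : V -> R) (A : set (V -> R)).
Hypotheses (A_p : A p) (A_sub : forall q, A q -> sublinear q /\ forall u, q u <= p u).
Hypothesis A_total : total_on A (fun q r => forall u, q u <= r u).

Let inf_fun_has_inf u : has_inf [set q u | q in A].
Proof.
split; first by exists (p u), p.
exists (- p (- u)) => _ [q Aq <-]; have [q_sub q_le] := A_sub Aq.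
have := q_le (- u); have := sublinear_ge_oppN q_sub u; lra.
Qed.

Lemma inf_fun_le q u : A q -> inf_fun A u <= q u.
Proof. by move=> Aq; apply: ge_inf; [case: (inf_fun_has_inf u)|exists q]. Qed.

Lemma le_inf_fun u y : (forall q, A q -> y <= q u) -> y <= inf_fun A u.
Proof.
move=> ley; apply: lb_le_inf; first by case: (inf_fun_has_inf u).
by move=> _ [q Aq <-]; exact: ley.
Qed.

Lemma sublinear_inf_fun : sublinear (inf_fun A).
Proof.
split=> [u v|k u k_gt0].
- rewrite -lerBlDr; apply: le_inf_fun => q Aq.
  suff : inf_fun A (u + v) - q u <= inf_fun A v by lra.
  apply: le_inf_fun => r Ar.
  have [[q_sub _] [r_sub _]] := (A_sub Aq, A_sub Ar).
  suff : exists2 s, A s & s (u + v) <= q u + r v.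
    by case=> s As; have := inf_fun_le (u + v) As; lra.
  have [qr|rq] := A_total Aq Ar.
  + by exists q => //; apply: le_trans (sublinearD q_sub u v) _; rewrite lerD2l.
  + by exists r => //; apply: le_trans (sublinearD r_sub u v) _; rewrite lerD2r.
- rewrite -ler_pdivrMl //; apply: le_inf_fun => q Aq.
  rewrite ler_pdivrMl //; apply: le_trans (inf_fun_le _ Aq) _.
  exact: sublinearZ (A_sub Aq).1 _ _ k_gt0.
Qed.

End ChainInf.

Lemma sublinear_chain_lb (p : V -> R) (B : set (V -> R)) : sublinear p ->
  (forall q, B q -> sublinear q /\ forall u, q u <= p u) ->
  total_on B (fun q r => forall u, q u <= r u) ->
  exists2 m, sublinear m /\ (forall u, m u <= p u) & forall q u, B q -> m u <= q u.
Proof.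
move=> p_sub B_sub B_total; pose A := p |` B.
have A_p : A p by left.
have A_sub q : A q -> sublinear q /\ forall u, q u <= p u by case=> [->|/B_sub].
have A_total : total_on A (fun q r => forall u, q u <= r u).
  move=> q r [->|Bq] [->|Br]; first by left.
  - by right; exact: (B_sub _ Br).2.
  - by left; exact: (B_sub _ Bq).2.
  - exact: B_total.
exists (inf_fun A).
  exact: conj (sublinear_inf_fun A_p A_sub A_total) (fun u => inf_fun_le A_p A_sub u A_p).
by move=> q u Bq; apply: (inf_fun_le A_p A_sub); right.
Qed.

Theorem hahn_banach (p : V -> R) : sublinear p ->
  exists L : {scalar V}, forall u, L u <= p u.
Proof.
move=> p_sub.
pose T := {q : V -> R | sublinear q /\ forall u, q u <= p u}.
pose below (q r : T) := `[< forall u, sval r u <= sval q u >].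
have p_T : sublinear p /\ forall u, p u <= p u by [].
have [| | |[q [q_sub q_le]] q_max] := ZL_preorder (exist _ p p_T) (R := below).
- by move=> q; apply/asboolP.
- move=> q r s /asboolP qr /asboolP rs; apply/asboolP => u.
  exact: le_trans (rs u) (qr u).
- move=> B B_total.
  have B_sub q : (sval @` B) q -> sublinear q /\ forall u, q u <= p u.
    by case=> r _ <-; exact: (svalP r).
  have [|m m_T m_le] := sublinear_chain_lb p_sub B_sub.
    move=> _ _ [q Bq <-] [r Br <-].
    by have [/asboolP|/asboolP] := B_total _ _ Bq Br; [right|left].
  by exists (exist _ m m_T) => q Bq; apply/asboolP => u; apply: m_le; exists q.
- have q_min r : sublinear r -> (forall u, r u <= q u) -> forall u, q u <= r u.
    move=> r_sub r_le u.
    have r_T : sublinear r /\ forall u, r u <= p u.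
      by split => // v; exact: le_trans (r_le v) (q_le v).
    have qr : below (exist _ q (conj q_sub q_le)) (exist _ r r_T) by apply/asboolP.
    by have /asboolP := q_max _ qr; apply.
  have q_lin := sublinear_odd_scalar q_sub (minimal_sublinear_odd q_sub q_min).
  by exists (HB.pack_for {scalar V} q (GRing.isLinear.Build _ _ _ _ q q_lin)).
Qed.

Lemma hahn_banach_cone (p : V -> R) (C : V -> R -> Prop) :
  sublinear p -> cone C -> (forall v a, C v a -> a <= p v) ->
  exists L : {scalar V}, (forall u, L u <= p u) /\ forall v a, C v a -> a <= L v.
Proof.
move=> p_sub C_cone C_le.
have [L L_le] := hahn_banach (sublinear_cone_inf p_sub C_cone C_le).
exists L; split=> [u|v a Cva].
- exact: le_trans (L_le u) (cone_inf_le0 p_sub C_cone C_le u).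
- have := le_trans (L_le (- v)) (cone_infN p_sub C_cone C_le Cva).
  by rewrite linearN lerN2.
Qed.

Section ConicHull.
Variables (I : Type) (g : I -> V) (b : I -> R).

Definition conic_hull (v : V) (a : R) : Prop :=
  exists n (t : 'I_n -> R) (xs : 'I_n -> I), [/\ forall j, 0 <= t j,
    v = \sum_(j < n) t j *: g (xs j) & a = \sum_(j < n) t j * b (xs j)].

Definition convex_dominated (p : V -> R) : Prop :=
  forall n (t : 'I_n -> R) (xs : 'I_n -> I), (forall j, 0 <= t j) ->
    \sum_(j < n) t j = 1 ->
    \sum_(j < n) t j * b (xs j) <= p (\sum_(j < n) t j *: g (xs j)).

Lemma conic_hull1 i : conic_hull (g i) (b i).
Proof.
by exists 1, (fun=> 1), (fun=> i); split=> //; rewrite big_ord1 ?scale1r ?mul1r.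
Qed.

Lemma cone_conic_hull : cone conic_hull.
Proof.
split.
- have xs : 'I_0 -> I by case=> m; rewrite ltn0.
  by exists 0, (fun=> 0), xs; split=> //; rewrite big_ord0.
- move=> _ _ _ _ [m [t [xs [t_ge0 -> ->]]]] [n [s [ys [s_ge0 -> ->]]]].
  pose ts (j : 'I_(m + n)) :=
    match fintype.split j with inl i => t i | inr i => s i end.
  pose xys (j : 'I_(m + n)) :=
    match fintype.split j with inl i => xs i | inr i => ys i end.
  have split_l i : fintype.split (lshift n i) = inl i := unsplitK (inl i).
  have split_r i : fintype.split (rshift m i) = inr i := unsplitK (inr i).
  exists (m + n), ts, xys; split.
  + by move=> j; rewrite /ts; case: (fintype.split j).
  + by rewrite big_split_ord /ts /xys; congr (_ + _); apply: eq_bigr => i _;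
      rewrite ?split_l ?split_r.
  + by rewrite big_split_ord /ts /xys; congr (_ + _); apply: eq_bigr => i _;
      rewrite ?split_l ?split_r.
- move=> k _ _ k_gt0 [n [t [xs [t_ge0 -> ->]]]].
  exists n, (fun j => k * t j), xs; split.
  + by move=> j; exact: mulr_ge0 (ltW k_gt0) (t_ge0 j).
  + by rewrite scaler_sumr; apply: eq_bigr => j _; rewrite scalerA.
  + by rewrite mulr_sumr; apply: eq_bigr => j _; rewrite mulrA.
Qed.

Lemma conic_hull_le (p : V -> R) : sublinear p -> convex_dominated p ->
  forall v a, conic_hull v a -> a <= p v.
Proof.
move=> p_sub dom _ _ [n [t [xs [t_ge0 -> ->]]]].
have [T0|T_gt0] := eqVneq (\sum_(j < n) t j) 0.
  have t0 j : t j = 0 by apply: (psumr_eq0P (fun j _ => t_ge0 j) T0).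
  rewrite !big1 ?sublinear0 // => j _; by rewrite t0 ?scale0r ?mul0r.
set T := \sum_(j < n) t j in T_gt0.
have {}T_gt0 : 0 < T by rewrite lt_def T_gt0 sumr_ge0.
have Tinv_ge0 : 0 <= T^-1 by rewrite invr_ge0 ltW.
have := dom n (fun j => T^-1 * t j) xs (fun j => mulr_ge0 Tinv_ge0 (t_ge0 j)).
rewrite -mulr_sumr mulVf ?gt_eqF // => /(_ erefl).
under eq_bigr do rewrite -mulrA.
under [in X in p X]eq_bigr do rewrite -scalerA.
by rewrite -mulr_sumr -scaler_sumr sublinearZ_nneg // ler_pM2l ?invr_gt0.
Qed.

Theorem mazur_orlicz (p : V -> R) : sublinear p ->
  (exists L : {scalar V}, (forall u, L u <= p u) /\ forall i, b i <= L (g i)) <->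
  convex_dominated p.
Proof.
move=> p_sub; split=> [[L [L_le b_le]] n t xs t_ge0 _|dom].
  apply: le_trans (L_le _); rewrite linear_sum.
  by apply: ler_sum => j _; rewrite linearZ ler_wpM2l.
have [L [L_le C_le]] := hahn_banach_cone p_sub cone_conic_hull (conic_hull_le p_sub dom).
by exists L; split=> // i; apply: C_le; apply: conic_hull1.
Qed.

End ConicHull.

End Sublinear.

Lemma ereal_inf_le_lbounds (R : realType) (S : set \bar R) (y : R) :
  (forall r, (forall s, S s -> r%:E <= s)%E -> r <= y) -> (ereal_inf S <= y%:E)%E.
Proof.
move=> lb_le; case E: (ereal_inf S) => [r| |]; last exact: leNye.
- by rewrite lee_fin; apply: lb_le => s Ss; rewrite -E; exact: ereal_inf_lbound.
- exfalso; suff : y + 1 <= y by lra.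
  apply: lb_le => s Ss.
  by have /ereal_inf_pinfty/(_ s Ss) -> := E; rewrite leey.
Qed.

Section BoundedFunctions.
Variables (Lam : Type) (l0 : Lam).
Implicit Types phi : Lam -> RR.

Definition bounded : {pred Lam -> RR^o} := fun phi => `[< linfty phi >].

Lemma linfty_comb a phi psi :
  linfty phi -> linfty psi -> linfty (fun l => a * phi l + psi l).
Proof.
move=> [M phi_le] [N psi_le]; exists (`|a| * M + N) => l.
by rewrite (le_trans (ler_normD _ _)) // lerD // normrM ler_wpM2l.
Qed.

Lemma bounded_submod_closed : submod_closed bounded.
Proof.
split; first by apply/asboolP; exists 0 => l; rewrite normr0.
by move=> a phi psi /asboolP phi_b /asboolP psi_b; apply/asboolP/linfty_comb.
Qed.

HB.instance Definition _ :=
  GRing.isSubmodClosed.Build _ _ bounded bounded_submod_closed.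

Record bfun := BFun { bfun_val :> Lam -> RR^o; bfun_bounded : bfun_val \in bounded }.
HB.instance Definition _ := [isSub for bfun_val].
HB.instance Definition _ := [Choice of bfun by <:].
HB.instance Definition _ := [SubChoice_isSubLmodule of bfun by <:].

Lemma bfunP (u : bfun) : linfty u.
Proof. exact/asboolP/bfun_bounded. Qed.

Lemma bfun_sumE (I : Type) (r : seq I) (u : I -> bfun) l :
  (\sum_(i <- r) u i) l = \sum_(i <- r) u i l.
Proof. by rewrite -[LHS]/(val (\sum_(i <- r) u i) l) raddf_sum fct_sumE. Qed.

Definition lsup (phi : Lam -> RR) : RR := sup (range phi).

Lemma lsup_ub phi l : linfty phi -> phi l <= lsup phi.
Proof.
move=> [M phi_le]; apply: ub_le_sup; last by exists l.
by exists M => _ [k _ <-]; exact: le_trans (ler_norm _) (phi_le k).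
Qed.

Lemma lsup_le phi M : (forall l, phi l <= M) -> lsup phi <= M.
Proof.
by move=> phi_le; apply: ge_sup => [|_ [l _ <-]]; first by exists (phi l0), l0.
Qed.

Lemma supL_lsup phi : linfty phi -> supL phi = (lsup phi)%:E.
Proof.
move=> [M phi_le]; rewrite /supL -ereal_sup_EFin ?image_comp //.
  by exists M => _ [l _ <-]; exact: le_trans (ler_norm _) (phi_le l).
by exists (phi l0), l0.
Qed.

Lemma linfty_shift phi c : linfty phi -> linfty (fun l => phi l + c).
Proof.
by case=> M phi_le; exists (M + `|c|) => l /=; rewrite (le_trans (ler_normD _ _)) ?lerD.
Qed.

Lemma lsup_shift phi c : linfty phi -> lsup (fun l => phi l + c) = lsup phi + c.
Proof.
move=> phi_b; have phic_b := linfty_shift c phi_b.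
apply/eqP; rewrite eq_le; apply/andP; split.
  by apply: lsup_le => l; rewrite lerD2r lsup_ub.
by rewrite -lerBrDr; apply: lsup_le => l; rewrite lerBrDr (lsup_ub l phic_b).
Qed.

Lemma supL_shift (u : bfun) c : supL (fun l => u l + c) = (lsup u + c)%:E.
Proof.
rewrite supL_lsup; last exact/linfty_shift/bfunP.
by rewrite lsup_shift //; exact: bfunP.
Qed.

Lemma sublinear_lsup : sublinear (fun u : bfun => lsup u).
Proof.
split=> [u v|a u a_gt0]; apply: lsup_le => l /=.
- by apply: lerD; apply/lsup_ub/bfunP.
- by rewrite ler_pM2l //; apply/lsup_ub/bfunP.
Qed.

Lemma scalar_norm_le (L : {scalar bfun}) (u : bfun) M :
  (forall v, L v <= lsup v) -> (forall l, `|u l| <= M) -> `|L u| <= M.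
Proof.
move=> L_le u_le; rewrite ler_norml -lerNl -linearN.
apply/andP; split; apply: le_trans (L_le _) _; apply: lsup_le => l.
- by rewrite -[X in X <= _]/(- u l) lerNl; exact: lerNnormlW (u_le l).
- exact: ler_normlW (u_le l).
Qed.

Lemma DeltaL_scalarE (I : Type) (g : I -> bfun) (b : I -> RR) :
  (exists Phi, DeltaL Phi /\ forall i, b i <= Phi (g i)) <->
  (exists L : {scalar bfun}, (forall u, L u <= lsup u) /\ forall i, b i <= L (g i)).
Proof.
split=> [[Phi [[[Phi_lin _] Phi_le] b_le]]|[L [L_le b_le]]].
- have L_lin : scalar (fun u : bfun => Phi u).
    by move=> a u v; apply: Phi_lin; exact: bfunP.
  exists (HB.pack_for {scalar bfun} (fun u : bfun => Phi u)
    (GRing.isLinear.Build _ _ _ _ _ L_lin)).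
  split=> // u /=.
  by have := Phi_le u (bfunP u); rewrite supL_lsup ?lee_fin //; exact: bfunP.
- have val_insubd phi : linfty phi -> val (insubd (0 : bfun) phi) = phi.
    by move=> phi_b; apply: insubdK; exact/asboolP.
  (* Off l^oo(Lam), where Delta_Lam imposes nothing, [insubd 0] gives 0. *)
  exists (fun phi => L (insubd 0 phi)); split; last by move=> i; rewrite valKd.
  split; first split.
  + move=> a phi psi phi_b psi_b; rewrite -linearP; congr (L _); apply: val_inj.
    by rewrite /= !val_insubd //; exact: linfty_comb.
  + exists 1 => phi M phi_le; rewrite mul1r.
    have phi_b : linfty phi by exists M.
    by apply: scalar_norm_le => // l; rewrite val_insubd.
  + move=> phi phi_b; rewrite supL_lsup // lee_fin.
    by have := L_le (insubd 0 phi); rewrite val_insubd.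
Qed.

End BoundedFunctions.

Section InfsupConvex.
Variables (X Lam : Type) (l0 : Lam) (f : X -> RR) (F : Lam -> X -> RR).
Hypothesis hF : forall x, linfty (fun l => F l x).

Definition bounded_col (x : X) : bfun Lam := BFun (asboolT (hF x)).

Let supL_col x : supL (fun l => F l x - f x) = (lsup (bounded_col x) - f x)%:E.
Proof. exact: supL_shift l0 (bounded_col x) (- f x). Qed.

Let supL_comb n (t : 'I_n -> RR) (xs : 'I_n -> X) :
  supL (fun l => \sum_(j < n) t j * (F l (xs j) - f (xs j))) =
  (lsup (\sum_(j < n) t j *: bounded_col (xs j)) - \sum_(j < n) t j * f (xs j))%:E.
Proof.
rewrite -(supL_shift l0); congr supL; apply/funext => l.
by rewrite bfun_sumE -sumrN -big_split; apply: eq_bigr => j _; rewrite mulrBr.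
Qed.

Let convex_shift n (t : 'I_n -> RR) (xs : 'I_n -> X) alpha : \sum_(j < n) t j = 1 ->
  \sum_(j < n) t j * (f (xs j) + alpha) = \sum_(j < n) t j * f (xs j) + alpha.
Proof.
move=> t_sum; under eq_bigr do rewrite mulrDr.
by rewrite big_split -mulr_suml t_sum mul1r.
Qed.

Lemma infsup_convexE : infsup_convex (fun l x => F l x - f x) <->
  forall alpha, (forall x, ((f x + alpha)%:E <= supL (fun l => F l x))%E) ->
    convex_dominated bounded_col (fun x => f x + alpha) (fun u => lsup u).
Proof.
have lbE alpha : (forall x, ((f x + alpha)%:E <= supL (fun l => F l x))%E) <->
    (forall x, (alpha%:E <= supL (fun l => (F l x - f x)%R))%E).
  split=> le_sup x; have := le_sup x;
    by rewrite supL_col (supL_lsup l0 (hF x)) !lee_fin; lra.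
split=> [conv alpha /lbE alpha_lb n t xs t_ge0 t_sum|dom n t xs _ t_ge0 t_sum].
- have n_gt0 : (0 < n)%N.
    case: n t xs t_ge0 t_sum => // t _ _.
    by rewrite big_ord0 => /eqP; rewrite eq_sym oner_eq0.
  have := conv n t xs n_gt0 t_ge0 t_sum; rewrite supL_comb convex_shift //.
  have : (alpha%:E <= ereal_inf (range (fun x => supL (fun l => (F l x - f x)%R))))%E.
    by apply: le_ereal_inf_tmp => _ [x _ <-]; exact: alpha_lb.
  move=> /le_trans/[apply]; rewrite lee_fin; lra.
- rewrite supL_comb; apply: ereal_inf_le_lbounds => r r_lb.
  have /lbE/dom/(_ n t xs t_ge0 t_sum) :
      forall x, (r%:E <= supL (fun l => (F l x - f x)%R))%E.
    by move=> x; apply: r_lb; exists x.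
  rewrite convex_shift //; lra.
Qed.

End InfsupConvex.

Unset Implicit Arguments.
Local Close Scope classical_set_scope.

Theorem theorem3p2 (X Lam : Type) (x0 : X) (l0 : Lam)
  (f : X -> RR) (F : Lam -> X -> RR)
  (hF : forall x : X, linfty (fun l => F l x)) :
  infsup_convex (fun l x => F l x - f x) <->
  (forall alpha : RR,
     (forall x : X, ((f x + alpha)%:E <= supL (fun l => F l x))%E) ->
     exists Phi : (Lam -> RR) -> RR,
       DeltaL Phi /\ forall x : X, f x + alpha <= Phi (fun l => F l x)).
Proof.
have MO b := mazur_orlicz (bounded_col hF) b (sublinear_lsup l0).
have DE b := DeltaL_scalarE l0 (bounded_col hF) b.
rewrite (infsup_convexE l0 f hF); split=> H alpha /H.
- by move=> /MO/DE.
- by move=> /DE/MO.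
Qed.
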